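(* Fix a total order on $I$ and index by pairs $(m,n)$ with $m<n$ (i.e. by the off-diagonal fields $\langle m,n\rangle$). Define the matrix $S^{J}_{\langle m,n\rangle\langle p,q\rangle}=S_{mp}S_{nq}-S_{mq}S_{np}$ and the diagonal matrix $T^{J}_{\langle m,n\rangle}=T_mT_n$. Then $S^J$ is unitary, and if $S$ and $T$ satisfy $(ST)^3=S^2$ then $(S^JT^J)^3=(S^J)^2$.
   Context: Let $\mathcal{A}$ be a rational conformal field theory with finite set of primary fields $I$, unitary symmetric modular matrix $S$ and diagonal modular matrix $T=\mathrm{diag}(T_i)$, $T_i=e^{2\pi i(h_i-c/24)}$. The matrix $S^J$ above is the fixed point resolution matrix proposed for the anti-symmetric identity current $J=(0,1)$ of the $\mathbb{Z}_2$ permutation orbifold of $\mathcal{A}$, whose fixed points are exactly the off-diagonal fields $\langle m,n\rangle$, $m\neq n$. *)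

From HB Require Import structures.
From mathcomp Require Import all_boot all_order all_algebra all_field.
Set Implicit Arguments. Unset Strict Implicit. Unset Printing Implicit Defensive.
Import Order.TTheory GRing.Theory Num.Theory.
Local Open Scope ring_scope.

(* Primary fields I = 'I_k, totally ordered by the natural order on ordinals. *)
Definition offdiag (k : nat) := {p : 'I_k * 'I_k | (p.1 < p.2)%N}.

Definition npairs (k : nat) : nat := #|{: offdiag k}|.

Definition pair_of (k : nat) (a : 'I_(npairs k)) : 'I_k * 'I_k :=
  val (@enum_val (offdiag k) (mem predT) a).

Definition unitary_mx (n : nat) (U : 'M[algC]_n) : Prop :=
  U *m (map_mx Num.conj U)^T = 1%:M.

Definition SJ (k : nat) (S : 'M[algC]_k) : 'M[algC]_(npairs k) :=
  \matrix_(a, b)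
    let mn := pair_of a in let pq := pair_of b in
    S mn.1 pq.1 * S mn.2 pq.2 - S mn.1 pq.2 * S mn.2 pq.1.

Definition TJ (k : nat) (t : 'rV[algC]_k) : 'M[algC]_(npairs k) :=
  diag_mx (\row_a let mn := pair_of a in t 0 mn.1 * t 0 mn.2).

From HB Require Import structures.
From mathcomp Require Import all_boot all_order all_algebra all_field.
From mathcomp Require Import ring.
Import Order.TTheory GRing.Theory Num.Theory.
Local Open Scope ring_scope.

(* The matrix S^J is the second exterior power of S: its entries are the 2x2
   minors of S indexed by strictly increasing pairs of rows and columns, and
   T^J is the second exterior power of the diagonal matrix T = diag t.
   The whole theorem then follows from functoriality of this construction.
   - Cauchy-Binet for 2x2 minors: the minor of a product A B is the sum over
     increasing pairs p of minor(A) * minor(B); hence [wedge2] is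
     multiplicative on matrices over any commutative ring.
   - [wedge2] of a diagonal matrix is diagonal (so [wedge2 1 = 1] and
     T^J = [wedge2 T]), and [wedge2] commutes with transposition and with
     entrywise ring morphisms such as complex conjugation.
   Unitarity of S^J is then [wedge2] applied to S S^dagger = 1, and the
   modular relation (S^J T^J)^3 = (S^J)^2 is [wedge2] applied to
   (S T)^3 = S^2; neither uses the symmetry of S nor |t_i| = 1. *)

Section SecondExteriorPower.
Variable R : comPzRingType.

Definition minor2 (m n : nat) (A : 'M[R]_(m, n)) (x : 'I_m * 'I_m)
    (y : 'I_n * 'I_n) : R :=
  A x.1 y.1 * A x.2 y.2 - A x.1 y.2 * A x.2 y.1.
Arguments minor2 {m n}.

Lemma minor2_mul (m k n : nat) (A : 'M[R]_(m, k)) (B : 'M[R]_(k, n)) x y :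
  minor2 (A *m B) x y =
  \sum_(p : 'I_k * 'I_k | (p.1 < p.2)%N) minor2 A x p * minor2 B p y.
Proof.
rewrite /minor2 !mxE !big_distrlr /= !pair_bigA /= -sumrB.
pose G (p : 'I_k * 'I_k) := A x.1 p.1 * A x.2 p.2 * minor2 B p y.
transitivity (\sum_(p : 'I_k * 'I_k) G p).
  by apply: eq_bigr => p _; rewrite /G /minor2; ring.
rewrite (bigID (fun p : 'I_k * 'I_k => (p.1 < p.2)%N)) /=.
(* pairs with equal components contribute nothing, since minor2 B p y = 0 *)
have -> : \sum_(p : 'I_k * 'I_k | ~~ (p.1 < p.2)%N) G p =
          \sum_(p : 'I_k * 'I_k | (p.2 < p.1)%N) G p.
  rewrite big_mkcond [RHS]big_mkcond; apply: eq_bigr => -[i j] _ /=.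
  rewrite -leqNgt leq_eqVlt; case: (ltngtP j i) => //= /val_inj ->.
  by rewrite /G /minor2 /=; ring.
(* the decreasing pairs pair up with the increasing ones by swapping *)
rewrite [X in _ + X](reindex_inj (h := fun p : 'I_k * 'I_k => (p.2, p.1))); last first.
  by move=> [a b] [c d] [-> ->].
by rewrite /= -big_split /=; apply: eq_bigr => p _; rewrite /G /minor2 /=; ring.
Qed.

Lemma pair_of_lt {k : nat} (a : 'I_(npairs k)) : ((pair_of a).1 < (pair_of a).2)%N.
Proof. exact: (valP (@enum_val (offdiag k) (mem predT) a)). Qed.

Lemma pair_of_inj {k : nat} : injective (@pair_of k).
Proof. by move=> a b /val_inj /enum_val_inj. Qed.

Lemma sum_increasing_pairs (k : nat) (G : 'I_k * 'I_k -> R) :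
  \sum_(p : 'I_k * 'I_k | (p.1 < p.2)%N) G p = \sum_(a < npairs k) G (pair_of a).
Proof.
transitivity (\sum_(u : offdiag k) G (val u)).
  rewrite (reindex_omap (val : offdiag k -> 'I_k * 'I_k) insub); last first.
    by move=> p lt_p; rewrite insubT.
  by apply: eq_bigl => -[p lt_p] /=; rewrite insubT ?lt_p /= eqxx.
by rewrite (big_enum_val (A := mem predT)).
Qed.

Definition wedge2 (m n : nat) (A : 'M[R]_(m, n)) : 'M[R]_(npairs m, npairs n) :=
  \matrix_(a, b) minor2 A (pair_of a) (pair_of b).
Arguments wedge2 {m n}.

Lemma wedge2_mul (m k n : nat) (A : 'M[R]_(m, k)) (B : 'M[R]_(k, n)) :
  wedge2 (A *m B) = wedge2 A *m wedge2 B.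
Proof.
apply/matrixP => a b; rewrite !mxE minor2_mul sum_increasing_pairs.
by apply: eq_bigr => c _; rewrite !mxE.
Qed.

Lemma wedge2_diag (k : nat) (d : 'rV[R]_k) :
  wedge2 (diag_mx d) =
  diag_mx (\row_a (d 0 (pair_of a).1 * d 0 (pair_of a).2)).
Proof.
apply/matrixP => a b; rewrite !mxE /minor2 !mxE.
have := pair_of_lt a; have := pair_of_lt b.
rewrite -(inj_eq pair_of_inj).
case: (pair_of a) => [x1 x2]; case: (pair_of b) => [y1 y2] /= lt_y lt_x.
(* the crossed term needs x1 = y2 and x2 = y1, impossible for increasing pairs *)
have no_cross : ~~ ((x1 == y2) && (x2 == y1)).
  apply/negP => /andP[/eqP e1 /eqP e2].
  by rewrite e1 e2 in lt_x; move: (ltn_trans lt_x lt_y); rewrite ltnn.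
move: no_cross; rewrite xpair_eqE.
by case: (x1 == y1) (x2 == y2) (x1 == y2) (x2 == y1) => [] [] [] [] //= _;
  rewrite ?mulr0n ?mulr1n ?mul0r ?mulr0 ?subr0.
Qed.

Lemma wedge2_1 (k : nat) : wedge2 (1%:M : 'M[R]_k) = 1%:M.
Proof.
have -> : (1%:M : 'M[R]_k) = diag_mx (const_mx 1).
  by apply/matrixP => i j; rewrite !mxE.
by rewrite wedge2_diag; apply/matrixP => a b; rewrite !mxE mulr1.
Qed.

Lemma wedge2_tr (m n : nat) (A : 'M[R]_(m, n)) : (wedge2 A)^T = wedge2 A^T.
Proof. by apply/matrixP => a b; rewrite !mxE /minor2 !mxE; ring. Qed.

Lemma wedge2_map (f : {rmorphism R -> R}) (m n : nat) (A : 'M[R]_(m, n)) :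
  map_mx f (wedge2 A) = wedge2 (map_mx f A).
Proof. by apply/matrixP => a b; rewrite !mxE /minor2 !mxE rmorphB !rmorphM. Qed.

End SecondExteriorPower.
Arguments wedge2 {R m n}.

Lemma SJ_wedge2 (k : nat) (S : 'M[algC]_k) : SJ S = wedge2 S.
Proof. by []. Qed.

Lemma TJ_wedge2 (k : nat) (t : 'rV[algC]_k) : TJ t = wedge2 (diag_mx t).
Proof. by rewrite wedge2_diag. Qed.

Theorem mainTheorem7 (k : nat) (S : 'M[algC]_k) (t : 'rV[algC]_k)
  (S_unitary : unitary_mx S) (S_sym : S^T = S)
  (t_phase : forall i, `|t 0 i| = 1) :
  let T := diag_mx t in
  unitary_mx (SJ S) /\
  (S *m T *m (S *m T) *m (S *m T) = S *m S ->
   SJ S *m TJ t *m (SJ S *m TJ t) *m (SJ S *m TJ t) = SJ S *m SJ S).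
Proof.
move=> T; split.
  by rewrite /unitary_mx SJ_wedge2 wedge2_map wedge2_tr -wedge2_mul S_unitary wedge2_1.
by move=> modular; rewrite SJ_wedge2 TJ_wedge2 -!wedge2_mul -/T modular.
Qed.
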